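(* Let $\mathcal{A}$ be a $0/1$-arrangement in $\mathbb{Q}^n$ admitting a nice partition $\pi$, and let $H_A,H_B\in\mathcal{A}$ with $A,B$ conflicting. Then $H_A$ and $H_B$ lie in different blocks of $\pi$.
   Context: $H_I=\ker\big(\sum_{i\in I}x_i\big)\subseteq\mathbb{Q}^n$ for $I\subseteq\{1,\dots,n\}$. A $0/1$-arrangement is an arrangement all of whose hyperplanes are of the form $H_I$ for nonempty $I$. For a $0/1$-arrangement $\mathcal{A}$ and $H_A,H_B\in\mathcal{A}$ with $A\neq B$, the sets $A,B$ are conflicting if either (1) $A\cap B\neq\emptyset$, $A\not\subseteq B$ and $B\not\subseteq A$; or (2) $A\cap B=\emptyset$ or $A\subset B$ or $B\subset A$, and $H_{A\triangle B}\notin\mathcal{A}$ ($\triangle$ = symmetric difference). A partition $\pi=(\pi_1,\dots,\pi_s)$ of $\mathcal{A}$ is independent if for every choice $H_i\in\pi_i$ the $s$ defining forms are linearly independent; for $X\in L(\mathcal{A})$ the induced partition $\pi_X$ of $\mathcal{A}_X=\{H\in\mathcal{A}:X\subseteq H\}$ consists of the nonempty sets $\pi_i\cap\mathcal{A}_X$; $\pi$ is nice (a factorization) if it is independent and for every $X\in L(\mathcal{A})\setminus\{V\}$ the induced partition $\pi_X$ has a block which is a singleton. *)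

From mathcomp Require Import all_boot all_order all_algebra.
Set Implicit Arguments. Unset Strict Implicit. Unset Printing Implicit Defensive.
Import GRing.Theory.
Local Open Scope ring_scope.

Definition form (n : nat) (I : {set 'I_n}) : 'rV[rat]_n :=
  \row_j (j \in I)%:R.

Definition hyp (n : nat) (I : {set 'I_n}) (x : 'rV[rat]_n) : Prop :=
  \sum_(j in I) x 0 j = 0.

(* A 0/1-arrangement: a finite set of hyperplanes H_I, I nonempty,
   represented by the set of their index sets I. *)
Definition zo_arrangement (n : nat) (A : {set {set 'I_n}}) : Prop :=
  set0 \notin A.

Definition conflicting (n : nat) (Arr : {set {set 'I_n}}) (A B : {set 'I_n}) : Prop :=
  A \in Arr /\ B \in Arr /\ A != B /\
  ( (A :&: B != set0 /\ ~~ (A \subset B) /\ ~~ (B \subset A))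
  \/ ((A :&: B == set0 \/ A \proper B \/ B \proper A)
      /\ ((A :\: B) :|: (B :\: A)) \notin Arr) ).

Definition is_partition (n s : nat) (Arr : {set {set 'I_n}})
    (pi : 'I_s -> {set {set 'I_n}}) : Prop :=
  (forall i, pi i != set0) /\
  (forall i j, i != j -> [disjoint pi i & pi j]) /\
  (\bigcup_(i < s) pi i = Arr).

Definition independent_partition (n s : nat) (pi : 'I_s -> {set {set 'I_n}}) : Prop :=
  forall h : 'I_s -> {set 'I_n}, (forall i, h i \in pi i) ->
    row_free (\matrix_(i < s, j < n) form (h i) 0 j).

(* The intersection X = cap_{I in S} H_I of a subset S of the arrangement;
   L(A) consists exactly of these X for S \subset A (S = set0 gives V). *)
Definition meet (n : nat) (S : {set {set 'I_n}}) (x : 'rV[rat]_n) : Prop :=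
  forall I, I \in S -> hyp I x.

Definition sub_hyp (n : nat) (X : 'rV[rat]_n -> Prop) (J : {set 'I_n}) : Prop :=
  forall x, X x -> hyp J x.

(* Nice partition (factorization): independent, and for every X in L(A)
   with X <> V, the induced partition pi_X of A_X has a singleton block,
   i.e. some block pi_i meets A_X = {H in A | X \subseteq H} in exactly
   one hyperplane. *)
Definition nice_partition (n s : nat) (Arr : {set {set 'I_n}})
    (pi : 'I_s -> {set {set 'I_n}}) : Prop :=
  is_partition Arr pi /\ independent_partition pi /\
  forall S : {set {set 'I_n}}, S \subset Arr ->
    (exists x, ~ meet S x) ->
    exists i : 'I_s, exists J, J \in pi i /\ sub_hyp (meet S) J /\
      forall K, K \in pi i -> sub_hyp (meet S) K -> K = J.

From mathcomp Require Import all_boot all_order all_algebra.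
From mathcomp Require Import lra.
Set Implicit Arguments. Unset Strict Implicit. Unset Printing Implicit Defensive.
Import GRing.Theory.
Local Open Scope ring_scope.

(* Suppose H_A and H_B lie in one block. Niceness at X = H_A ∩ H_B gives a
   hyperplane H_C ⊇ X that is alone in its block, which therefore is another
   block, so C ∉ {A, B}. The 0/1 form of C is then a rational combination of
   the forms of A and B, and testing it against unit vectors forces C ∈ {∅, A, B, A △ B}. Hence C = A △ B, which is excluded by either
   kind of conflict: for (1) the vector e_p + e_q - e_r with p ∈ A \ B,
   q ∈ B \ A, r ∈ A ∩ B lies in H_A ∩ H_B but not in H_{A △ B}; for (2)
   H_{A △ B} is not in the arrangement. *)

Lemma sum_eq_natr (R : pzSemiRingType) (T : finType) (X : {set T}) p :
  \sum_(j in X) ((j == p)%:R : R) = (p \in X)%:R.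
Proof.
case: (boolP (p \in X)) => pX.
  by rewrite (bigD1 p) //= eqxx big1 ?addr0 // => j /andP[_ /negbTE ->].
by rewrite big1 // => j jX; case: eqP => // jp; rewrite -jp jX in pX.
Qed.

Lemma hyp_delta3 n (X : {set 'I_n}) p q r (a b c : rat) :
  hyp X (a *: delta_mx 0 p + b *: delta_mx 0 q + c *: delta_mx 0 r) <->
  a * (p \in X)%:R + b * (q \in X)%:R + c * (r \in X)%:R = 0.
Proof.
rewrite /hyp; under eq_bigr do rewrite !mxE.
by rewrite !big_split /= -!mulr_sumr !sum_eq_natr.
Qed.

Lemma hyp_delta n (X : {set 'I_n}) p : hyp X (delta_mx 0 p) <-> p \notin X.
Proof.
rewrite /hyp; under eq_bigr do rewrite mxE /=; rewrite sum_eq_natr.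
by case: (p \in X); split=> //; rewrite oner_eq0.
Qed.

Section HyperplaneThroughMeet.
Variables (n : nat) (A B C : {set 'I_n}).
Hypothesis meet_subC : forall x, hyp A x -> hyp B x -> hyp C x.

Lemma notin_meet_superset x : x \notin A -> x \notin B -> x \notin C.
Proof.
by move=> xA xB; apply/hyp_delta/meet_subC; apply/hyp_delta.
Qed.

Lemma mem_meet_superset_region x y :
  (x \in A) = (y \in A) -> (x \in B) = (y \in B) -> (x \in C) = (y \in C).
Proof.
move=> eA eB.
have := meet_subC (x := 1 *: delta_mx 0 x + (-1) *: delta_mx 0 y + 0 *: delta_mx 0 y).
rewrite !hyp_delta3 eA eB /= ?mulr1n ?mulr0n => /(_ ltac:(lra) ltac:(lra)).
by case: (x \in C); case: (y \in C) => /=; rewrite ?mulr1n ?mulr0n; lra.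
Qed.

Lemma meet_superset_triple p q r :
  p \in A -> p \notin B -> q \notin A -> q \in B -> r \in A -> r \in B ->
  ((p \in C) + (q \in C) = (r \in C) :> nat)%N.
Proof.
move=> pA pB qA qB rA rB.
have := meet_subC (x := 1 *: delta_mx 0 p + 1 *: delta_mx 0 q + (-1) *: delta_mx 0 r).
rewrite !hyp_delta3 pA qB rA rB (negbTE pB) (negbTE qA) /= ?mulr1n ?mulr0n.
move=> /(_ ltac:(lra) ltac:(lra)).
by case: (p \in C); case: (q \in C); case: (r \in C);
  rewrite /= ?mulr1n ?mulr0n => h //; exfalso; lra.
Qed.

Lemma mem_meet_superset_in (R : {set 'I_n}) x :
  x \in R -> R \subset A :&: B -> (x \in C) = [exists y in R, y \in C].
Proof.
move=> xR /subsetP sRAB; apply/idP/existsP => [xC | [y /andP[yR yC]]].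
  by exists x; rewrite xR.
have /setIP[xA xB] := sRAB x xR; have /setIP[yA yB] := sRAB y yR.
by rewrite (mem_meet_superset_region (x := x) (y := y)) ?xA ?yA ?xB ?yB.
Qed.

(* Only the mod-2 shadow of the linear relation, so C = A △ B is not excluded. *)
Lemma meet_superset_xor :
  exists a b : bool, forall x, (x \in C) = (a && (x \in A)) (+) (b && (x \in B)).
Proof.
have out x : x \notin A -> x \notin B -> (x \in C) = false.
  by move=> xA xB; apply/negbTE/notin_meet_superset.
have reg := mem_meet_superset_region.
have [sAB | /subsetPn[p pA pB]] := boolP (A \subset B);
  have [sBA | /subsetPn[q qB qA]] := boolP (B \subset A).
- exists [exists y in A, y \in C], false => x.
  case xA: (x \in A); rewrite /= ?andbT ?andbF ?addbF ?addFb.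
    by rewrite (mem_meet_superset_in xA) // subsetI subxx sAB.
  by rewrite out ?xA //; apply: contraFN xA; apply: (subsetP sBA).
- exists ([exists y in A, y \in C] (+) (q \in C)), (q \in C) => x.
  case xA: (x \in A); case xB: (x \in B); rewrite /= ?andbT ?andbF ?addbF ?addFb.
  + by rewrite -addbA addbb addbF (mem_meet_superset_in xA) // subsetI subxx sAB.
  + by move: xB; rewrite (subsetP sAB).
  + by apply: reg; rewrite ?xA ?xB ?(negbTE qA) ?qB.
  + by rewrite out ?xA ?xB.
- exists (p \in C), ([exists y in B, y \in C] (+) (p \in C)) => x.
  case xA: (x \in A); case xB: (x \in B); rewrite /= ?andbT ?andbF ?addbF ?addFb.
  + by rewrite addbC -addbA addbb addbF (mem_meet_superset_in xB) // subsetI subxx sBA.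
  + by apply: reg; rewrite ?xA ?xB ?pA ?(negbTE pB).
  + by move: xA; rewrite (subsetP sBA).
  + by rewrite out ?xA ?xB.
- exists (p \in C), (q \in C) => x.
  case xA: (x \in A); case xB: (x \in B); rewrite /= ?andbT ?andbF ?addbF ?addFb.
  + have := meet_superset_triple pA pB qA qB xA xB.
    by case: (p \in C); case: (q \in C); case: (x \in C).
  + by apply: reg; rewrite ?xA ?xB ?pA ?(negbTE pB).
  + by apply: reg; rewrite ?xA ?xB ?(negbTE qA) ?qB.
  + by rewrite out ?xA ?xB.
Qed.

Lemma meet_superset_cases :
  [\/ C = set0, C = A, C = B | C = (A :\: B) :|: (B :\: A)].
Proof.
have [a [b memC]] := meet_superset_xor.
case: a b memC => [] [] memC;
  [constructor 4 | constructor 2 | constructor 3 | constructor 1]; apply/setP => x;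
  by rewrite memC ?inE; case: (x \in A); case: (x \in B).
Qed.

Lemma meet_superset_symdiff_comparable :
  C = (A :\: B) :|: (B :\: A) -> A :&: B != set0 -> (A \subset B) || (B \subset A).
Proof.
move=> defC /set0Pn[r /setIP[rA rB]]; apply/contraT; rewrite negb_or.
case/andP=> /subsetPn[p pA pB] /subsetPn[q qB qA].
have := meet_superset_triple pA pB qA qB rA rB.
by rewrite defC !inE pA pB qA qB rA rB.
Qed.
End HyperplaneThroughMeet.

Lemma meet_pair n (A B : {set 'I_n}) x :
  meet [set A; B] x <-> hyp A x /\ hyp B x.
Proof.
split=> [mAB | [hA hB] I /set2P[] ->] //.
by split; apply: mAB; rewrite !inE eqxx ?orbT.
Qed.

Lemma nice_partition_meet_pair n s (Arr : {set {set 'I_n}})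
    (pi : 'I_s -> {set {set 'I_n}}) i A B :
  nice_partition Arr pi -> A \in pi i -> B \in pi i -> A != B -> A != set0 ->
  exists2 C, C \in Arr &
    [/\ C != A, C != B & forall x, hyp A x -> hyp B x -> hyp C x].
Proof.
move=> [[_ [disj cover]] [_ nice]] Ai Bi AneB /set0Pn[a aA].
have ABsub : [set A; B] \subset Arr.
  by apply/subsetP => I /set2P[] ->; rewrite -cover; apply/bigcupP; exists i.
have ABproper : exists x, ~ meet [set A; B] x.
  exists (delta_mx 0 a) => /meet_pair[/hyp_delta aA' _].
  by rewrite aA in aA'.
have [j [C [Cj [meetC uniqC]]]] := nice _ ABsub ABproper.
have ji : j != i.
  apply: contraNneq AneB => ji; rewrite -ji in Ai Bi.
  have subA : sub_hyp (meet [set A; B]) A by move=> x /meet_pair[].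
  have subB : sub_hyp (meet [set A; B]) B by move=> x /meet_pair[].
  by rewrite (uniqC A Ai subA) (uniqC B Bi subB).
have Cpi : C \notin pi i by rewrite (disjointFr (disj _ _ ji) Cj).
exists C; first by rewrite -cover; apply/bigcupP; exists j.
split; [by apply: contraNneq Cpi => -> | by apply: contraNneq Cpi => -> |].
by move=> x hA hB; apply: meetC; apply/meet_pair.
Qed.

Theorem lemma8p7 (n s : nat) (Arr : {set {set 'I_n}})
    (pi : 'I_s -> {set {set 'I_n}}) (A B : {set 'I_n}) :
  zo_arrangement Arr -> nice_partition Arr pi -> conflicting Arr A B ->
  forall i : 'I_s, ~ (A \in pi i /\ B \in pi i).
Proof.
move=> zo nice_pi [Ain [_ [AneB conf]]] i [Ai Bi].
have A0 : A != set0 by apply: contraNneq zo => <-.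
have [C CArr [CA CB meetC]] := nice_partition_meet_pair nice_pi Ai Bi AneB A0.
have C0 : C != set0 by apply: contraNneq zo => <-.
have [/eqP|/eqP|/eqP|defC] := meet_superset_cases meetC;
  rewrite ?(negbTE C0) ?(negbTE CA) ?(negbTE CB) //.
case: conf => [[AB0 [nAB nBA]] | [_ notin]].
- have := meet_superset_symdiff_comparable meetC defC AB0.
  by rewrite (negbTE nAB) (negbTE nBA).
- by rewrite -defC CArr in notin.
Qed.
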